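(* Suppose $k_i^{(m)},h_i^{(m)}\in\mathbb{C}$ ($m,i\in\mathbb{Z}$) satisfy $$(i-n)k_i^{(m)}=(2m-n-i)h_{n-m+i}^{(n)}\quad\text{for all }m,n,i\in\mathbb{Z}.$$ Then there is $\lambda\in\mathbb{C}$ such that $k_i^{(m)}=h_i^{(m)}=\delta_{m,i}\lambda$ for all $m,i\in\mathbb{Z}$.
   Context: $\delta_{m,i}$ denotes the Kronecker delta. *)

From HB Require Import structures.
From mathcomp Require Import all_boot all_order all_algebra.
From mathcomp Require Import complex.
From mathcomp Require Import reals.

From HB Require Import structures.
From mathcomp Require Import all_boot all_order all_algebra.
From mathcomp Require Import complex.
From mathcomp Require Import reals.
From mathcomp Require Import zify.
Import GRing.Theory Num.Theory.
Local Open Scope ring_scope.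
Local Open Scope complex_scope.

(** Each instance of the relation with a vanishing coefficient on one side kills
    or identifies a single unknown: [i = n] forces [h] off the diagonal to vanish,
    [i = m] identifies [k m m] with [h n n] for [n != m], and [n = i + 1] then
    forces [k] off the diagonal to vanish.  Comparing two diagonal entries through
    a third index distinct from both shows that they all agree. *)

Lemma exists_int_neq2 (a b : int) : exists c : int, c != a /\ c != b.
Proof. by exists (`|a| + `|b| + 1)%R; split; apply/eqP; lia. Qed.

Section CoefficientRelation.

Context {R : numDomainType} {k h : int -> int -> R}.

Hypothesis relation : forall m n i : int,
  (i - n)%:~R * k m i = (2 * m - n - i)%:~R * h n (n - m + i).

Lemma h_offdiag n j : j != n -> h n j = 0.
Proof.
move=> neq_jn; have := relation (2 * n - j) n n.
rewrite subrr mul0r (_ : n - (2 * n - j) + n = j); last by lia.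
move/esym/eqP; rewrite mulf_eq0 intr_eq0 => /orP[/eqP coef0 | /eqP //].
by move: neq_jn; lia.
Qed.

Lemma k_diag_eq_h_diag m n : n != m -> k m m = h n n.
Proof.
move=> neq_nm; have := relation m n m.
rewrite (_ : 2 * m - n - m = m - n); last by lia.
rewrite (_ : n - m + m = n); last by lia.
by move/(mulfI _); apply; rewrite intr_eq0 subr_eq0 eq_sym.
Qed.

Lemma k_offdiag m i : m != i -> k m i = 0.
Proof.
move=> neq_mi; have := relation m (i + 1) i.
rewrite (_ : i - (i + 1) = -1); last by lia.
rewrite h_offdiag ?mulr0 ?mulN1r => [/eqP|]; first by rewrite oppr_eq0 => /eqP.
by apply/eqP; move: neq_mi; lia.
Qed.

Lemma h_diag_const n n' : h n n = h n' n'.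
Proof.
have [m [neq_mn neq_mn']] := exists_int_neq2 n n'.
by rewrite -(k_diag_eq_h_diag m n) 1?eq_sym // (k_diag_eq_h_diag m n') // eq_sym.
Qed.

Lemma k_diag_const m : k m m = h 0 0.
Proof.
have [n [neq_nm _]] := exists_int_neq2 m m.
by rewrite (k_diag_eq_h_diag m n) // (h_diag_const n 0).
Qed.

End CoefficientRelation.

Theorem proposition2p1 (R : realType) (k h : int -> int -> R[i])
  (H : forall m n i : int,
      (i - n)%:~R * k m i = (2 * m - n - i)%:~R * h n (n - m + i)) :
  exists lambda : R[i], forall m i : int,
    k m i = (if m == i then lambda else 0) /\
    h m i = (if m == i then lambda else 0).
Proof.
exists (h 0 0) => m i; case: eqVneq => [<- | neq_mi].
  by rewrite (k_diag_const H) (h_diag_const H m 0).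
by rewrite (k_offdiag H) // (h_offdiag H) // eq_sym.
Qed.
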